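(* Let $q\ge2$ be a prime power, $d\ge6$ and $2\le j\le d$. Then $|Q_j(d-1)|>|Q_j(d)|$, except possibly when $q=2$ and ($j=d$ or $j$ is even). In that exceptional case ($q=2$ and $j=d$ or $j$ even), $|Q_j(d-2)|>|Q_j(d)|$.
   Context: Let $b=-q$. For integers $m\ge0$ and $l$, ${m\brack l}_b=\prod_{t=1}^{l}\frac{b^{m-t+1}-1}{b^t-1}$ for $l\ge0$ and $0$ for $l<0$. For $0\le i,j\le d$, $$Q_j(i)=\sum_{h=0}^{\min\{j,d-i\}}(-1)^j(-q)^{\binom{j-h}{2}+hd}{d-h\brack d-j}_b{d-i\brack h}_b,$$ the eigenvalues of the Hermitian forms graph $Q_q(d,j)$. *)

From mathcomp Require Import all_boot all_order all_algebra.
Set Implicit Arguments. Unset Strict Implicit. Unset Printing Implicit Defensive.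
Import Order.TTheory GRing.Theory Num.Theory.
Local Open Scope ring_scope.

Definition prime_power (q : nat) : Prop :=
  exists p k : nat, prime p /\ (0 < k)%N /\ q = (p ^ k)%N.

Definition gbin (b : rat) (m : nat) (l : int) : rat :=
  match l with
  | Posz n => \prod_(1 <= t < n.+1) ((b ^ ((m%:Z) - (t%:Z) + 1) - 1) / (b ^+ t - 1))
  | Negz _ => 0
  end.

(* Eigenvalue Q_j(i) of the Hermitian forms graph Q_q(d,j), with b = -q. *)
Definition Qeig (q d j i : nat) : rat :=
  let b : rat := - (q%:R) in
  \sum_(0 <= h < (minn j (d - i)).+1)
     (-1) ^+ j * b ^+ ('C(j - h, 2) + h * d)
     * gbin b (d - h) ((d%:Z) - (j%:Z)) * gbin b (d - i) (h%:Z).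

(* Only the terms h <= d - i survive in Q_j(i), so Q_j(d), Q_j(d-1), Q_j(d-2)
   are sums of one, two and three terms, each a power of b times a Gaussian
   binomial [n brack d-j]_b with n in {d, d-1, d-2}.  The "Pascal" relation
     [n+1 brack k]_b (b^(n+1-k) - 1) = [n brack k]_b (b^(n+1) - 1)
   expresses all of them through the smallest one.  After multiplying by the
   nonzero factor b^j - 1 (resp. (b^(j-1) - 1)(b^j - 1)) and dividing out a
   common nonzero factor c, the eigenvalues become explicit polynomials in
   u = b^(j-1), p = b^d (resp. u = b^(j-2), r = b^(d-1)), and the claims
   reduce to elementary inequalities between absolute values of these
   polynomials: by the triangle inequality for Q_j(d-1), and by a sign
   analysis of u and r for Q_j(d-2) with q = 2.  The file develops, in this order: Gaussian binomials
   and their Pascal relation; closed forms of Q_j(d), Q_j(d-1), Q_j(d-2);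
   the scaled polynomial forms; the polynomial inequalities; the two
   dominance statements; and finally the theorem.  In fact the proof shows
   |Q_j(d-2)| > |Q_j(d)| for q = 2 and every 2 <= j <= d, and needs no
   lower bound on d. *)

From mathcomp Require Import all_boot all_order all_algebra ring lra zify.
Set Implicit Arguments. Unset Strict Implicit. Unset Printing Implicit Defensive.
Import Order.TTheory GRing.Theory Num.Theory.
Local Open Scope ring_scope.

Section Gaussian.
Variable F : fieldType.
Implicit Types (b : F) (m n k : nat).

Definition gauss b m k : F :=
  \prod_(1 <= t < k.+1) ((b ^+ (m.+1 - t) - 1) / (b ^+ t - 1)).

Lemma gauss0 b m : gauss b m 0 = 1.
Proof. by rewrite /gauss big_geq. Qed.

Lemma gaussS b m k :
  gauss b m k.+1 = gauss b m k * ((b ^+ (m - k) - 1) / (b ^+ k.+1 - 1)).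
Proof. by rewrite /gauss big_nat_recr //= subSS. Qed.

Lemma gauss_shift b n k : (k <= n)%N ->
  gauss b n.+1 k * (b ^+ (n.+1 - k) - 1) = gauss b n k * (b ^+ n.+1 - 1).
Proof.
elim: k => [|k IH] kn; first by rewrite !gauss0 subn0.
have {}IH := IH (ltnW kn).
rewrite subSn in IH; last exact: ltnW.
rewrite !gaussS subSS subSn; last exact: ltnW.
transitivity (gauss b n.+1 k * (b ^+ (n - k).+1 - 1)
              * ((b ^+ (n - k) - 1) / (b ^+ k.+1 - 1))); first by ring.
by rewrite IH; ring.
Qed.

Lemma gauss11 b : b - 1 != 0 -> gauss b 1 1 = 1.
Proof. by move=> b1; rewrite /gauss big_nat1 expr1 divff. Qed.

Lemma gauss21 b : b - 1 != 0 -> gauss b 2 1 = b + 1.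
Proof.
move=> b1; rewrite /gauss big_nat1 expr1 /=.
by rewrite (_ : b ^+ 2 - 1 = (b + 1) * (b - 1)) ?mulfK //; ring.
Qed.

Lemma gauss22 b : b - 1 != 0 -> b ^+ 2 - 1 != 0 -> gauss b 2 2 = 1.
Proof.
move=> b1 b2; rewrite /gauss big_nat_recr // big_nat1 /= expr1.
by rewrite mulrA mulfVK // divff.
Qed.
End Gaussian.

Lemma gbin_gauss (b : rat) m k : (k <= m)%N -> gbin b m k%:Z = gauss b m k.
Proof.
move=> km; apply: eq_big_nat => t /andP[_ tk].
suff -> : (m%:Z - t%:Z + 1)%R = (m.+1 - t)%N :> int by [].
lia.
Qed.

Lemma expr_sub1_neq0 (R : numDomainType) (b : R) n :
  1 < `|b| -> (0 < n)%N -> b ^+ n - 1 != 0.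
Proof.
move=> b1 n0; have := exprn_egt1 n b1; rewrite -lt0n n0 subr_eq0 => bn_gt1.
by apply: contraTN bn_gt1 => /eqP bn1; rewrite -normrX bn1 normr1 ltxx.
Qed.

Lemma gauss_neq0 (R : numFieldType) (b : R) m k :
  1 < `|b| -> (k <= m)%N -> gauss b m k != 0.
Proof.
move=> b1 km; rewrite /gauss big_nat_cond prodf_seq_neq0; apply/allP => t _.
apply/implyP => /andP[/andP[t1 tk] _].
by rewrite mulf_neq0 ?invr_eq0 ?expr_sub1_neq0 // subn_gt0 (leq_trans tk).
Qed.

(* From here on gauss is an atom; otherwise `ring` unfolds its product. *)
Opaque gauss.

Section ClosedForms.
Variable q : nat.
Hypothesis q2 : (2 <= q)%N.
Local Notation b := (- q%:R : rat).

Lemma normb_gt1 : 1 < `|b|.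
Proof. by rewrite normrN ger0_norm // ltr1n. Qed.

Let b1 : b - 1 != 0. Proof. by rewrite -[b]expr1 expr_sub1_neq0 // normb_gt1. Qed.
Let b2 : b ^+ 2 - 1 != 0. Proof. by rewrite expr_sub1_neq0 // normb_gt1. Qed.

Lemma Qeig_top k j :
  Qeig q (k + j) j (k + j) = (-1) ^+ j * b ^+ 'C(j, 2) * gauss b (k + j) k.
Proof.
rewrite /Qeig subnn minn0 big_nat1 PoszD addrK !subn0 !gbin_gauss ?leq_addr //.
by rewrite gauss0 mul0n addn0 mulr1.
Qed.

Lemma Qeig_sub1 k m :
  Qeig q (k + m.+1) m.+1 (k + m) =
    (-1) ^+ m.+1 * b ^+ 'C(m.+1, 2) * gauss b (k + m.+1) k
    + (-1) ^+ m.+1 * b ^+ ('C(m, 2) + (k + m.+1)) * gauss b (k + m) k.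
Proof.
rewrite /Qeig (_ : (k + m.+1 - (k + m) = 1)%N); last lia.
rewrite (_ : (minn m.+1 1).+1 = 2)%N; last lia.
rewrite big_nat_recr // big_nat1 PoszD addrK !subn0 mul0n addn0 mul1n.
have -> : (m.+1 - 1 = m)%N by rewrite subn1.
have -> : (k + m.+1 - 1 = k + m)%N by rewrite addnS subn1.
by rewrite !gbin_gauss ?leq_addr // gauss0 gauss11 // !mulr1.
Qed.

Lemma Qeig_sub2 k m :
  Qeig q (k + m.+2) m.+2 (k + m) =
    (-1) ^+ m.+2 * b ^+ 'C(m.+2, 2) * gauss b (k + m.+2) k
    + (-1) ^+ m.+2 * b ^+ ('C(m.+1, 2) + (k + m.+2)) * gauss b (k + m.+1) k * (b + 1)
    + (-1) ^+ m.+2 * b ^+ ('C(m, 2) + 2 * (k + m.+2)) * gauss b (k + m) k.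
Proof.
rewrite /Qeig (_ : (k + m.+2 - (k + m) = 2)%N); last lia.
rewrite (_ : (minn m.+2 2).+1 = 3)%N; last lia.
rewrite big_nat_recr // big_nat_recr // big_nat1 PoszD addrK !subn0 mul0n addn0 mul1n.
have -> : (m.+2 - 1 = m.+1)%N by rewrite subn1.
have -> : (m.+2 - 2 = m)%N by rewrite subn2.
have -> : (k + m.+2 - 1 = k + m.+1)%N by rewrite addnS subn1.
have -> : (k + m.+2 - 2 = k + m)%N by rewrite !addnS subn2.
by rewrite !gbin_gauss ?leq_addr // gauss0 gauss21 // gauss22 // !mulr1.
Qed.
End ClosedForms.

Section ScaledForms.
Variables q m k : nat.
Hypothesis q2 : (2 <= q)%N.
Local Notation b := (- q%:R : rat).
Local Notation u := (b ^+ m).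
Local Notation G := (gauss b (k + m) k).

Let shift_top : gauss b (k + m.+1) k * (b * u - 1) = G * (b ^+ (k + m.+1) - 1).
Proof.
have := gauss_shift b (leq_addr m k).
by rewrite -addnS (_ : (k + m.+1 - k = m.+1)%N) ?exprS // addKn.
Qed.

Lemma Qeig_sub1_scaled :
  let c := (-1) ^+ m.+1 * b ^+ 'C(m, 2) * G in
  let p := b ^+ (k + m.+1) in
  Qeig q (k + m.+1) m.+1 (k + m.+1) * (b * u - 1) = c * (u * (p - 1)) /\
  Qeig q (k + m.+1) m.+1 (k + m) * (b * u - 1) = c * (u * (p - 1) + p * (b * u - 1)).
Proof.
move=> c p; rewrite Qeig_sub1 // Qeig_top binS bin1 !(exprD _ 'C(m, 2)).
have top : (-1) ^+ m.+1 * (b ^+ 'C(m, 2) * u) * gauss b (k + m.+1) k * (b * u - 1)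
           = c * (u * (p - 1)) by rewrite -mulrA shift_top /c /p; ring.
split; first exact: top.
by rewrite mulrDl top /c /p; ring.
Qed.

Let shift_next :
  gauss b (k + m.+2) k * (b ^+ 2 * u - 1) = gauss b (k + m.+1) k * (b * b ^+ (k + m.+1) - 1).
Proof.
have := gauss_shift b (leq_addr m.+1 k).
by rewrite -!addnS addKn => e; rewrite -exprD add2n e -exprS -addnS.
Qed.

Lemma Qeig_sub2_scaled :
  let c := (-1) ^+ m * b ^+ 'C(m, 2) * G in
  let r := b ^+ (k + m.+1) in
  let N := (b * u - 1) * (b ^+ 2 * u - 1) in
  let A := b * u ^+ 2 * (r - 1) * (b * r - 1) in
  Qeig q (k + m.+2) m.+2 (k + m.+2) * N = c * A /\
  Qeig q (k + m.+2) m.+2 (k + m) * N =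
    c * (A + u * b * r * (b + 1) * (r - 1) * (b ^+ 2 * u - 1)
         + b ^+ 2 * r ^+ 2 * (b * u - 1) * (b ^+ 2 * u - 1)).
Proof.
move=> c r N A; rewrite Qeig_sub2 // Qeig_top.
have sgn : (-1) ^+ m.+2 = (-1) ^+ m :> rat by rewrite !exprS !mulN1r opprK.
have e1 : b ^+ 'C(m.+2, 2) = b ^+ 'C(m, 2) * (b * u ^+ 2).
  by rewrite !binS bin1 bin0 -addnA !exprD expr1; ring.
have e2 : b ^+ ('C(m.+1, 2) + (k + m.+2)) = b ^+ 'C(m, 2) * (u * (b * r)).
  by rewrite binS bin1 -addnA exprD (exprD _ m) /r -exprS -addnS.
have e3 : b ^+ ('C(m, 2) + 2 * (k + m.+2)) = b ^+ 'C(m, 2) * (b * r) ^+ 2.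
  by rewrite exprD mulnC exprM -exprS -addnS.
rewrite sgn e1 e2 e3.
have top : (-1) ^+ m * (b ^+ 'C(m, 2) * (b * u ^+ 2)) * gauss b (k + m.+2) k * N = c * A.
  transitivity ((-1) ^+ m * b ^+ 'C(m, 2) * b * u ^+ 2 * (b * u - 1)
                * (gauss b (k + m.+2) k * (b ^+ 2 * u - 1))); first by rewrite /N; ring.
  rewrite shift_next.
  transitivity ((-1) ^+ m * b ^+ 'C(m, 2) * b * u ^+ 2 * (b * r - 1)
                * (gauss b (k + m.+1) k * (b * u - 1))); first by rewrite /r; ring.
  by rewrite shift_top /c /A /r; ring.
split; first exact: top.
rewrite !mulrDl top.
transitivity (c * A + (-1) ^+ m * b ^+ 'C(m, 2) * u * b * r * (b + 1) * (b ^+ 2 * u - 1)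
                      * (gauss b (k + m.+1) k * (b * u - 1))
              + (-1) ^+ m * (b ^+ 'C(m, 2) * (b * r) ^+ 2) * G * N); first by rewrite /N; ring.
by rewrite shift_top /c /N /r; ring.
Qed.
End ScaledForms.

(* Polynomial inequality behind |Q_j(d)| < |Q_j(d-1)| for q >= 3 (b <= -3):
   the term u p (1 + b) of the second expression dominates. *)
Lemma dom_sub1_large (R : realFieldType) (b u p : R) :
  b <= -3 -> `|b| <= `|u| -> `|b| * `|u| <= `|p| ->
  `|u * (p - 1)| < `|u * (p - 1) + p * (b * u - 1)|.
Proof.
move=> b3 bu up.
have nA : `|u * (p - 1)| <= `|u| * (`|p| + 1).
  by rewrite normrM ler_wpM2l // (le_trans (ler_normB _ _)) // normr1.
have nb1 : `|1 + b| = - 1 - b by rewrite ler0_norm; [ring | lra].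
have nB : `|u| * `|p| * (- 1 - b) - (`|u| + `|p|) <= `|u * (p - 1) + p * (b * u - 1)|.
  have -> : u * (p - 1) + p * (b * u - 1) = u * p * (1 + b) - (u + p) by ring.
  by rewrite -nb1 -!normrM (le_trans _ (lerB_dist _ _)) // lerD2l lerN2 ler_normD.
have nb : `|b| = - b by rewrite ler0_norm //; lra.
rewrite nb in bu up.
set X := `|u| in nA nB bu up *; set Y := `|p| in nA nB up *.
have XY2 : 2 * (X * Y) <= X * Y * (- 1 - b).
  by rewrite [X in _ <= X]mulrC ler_wpM2r ?mulr_ge0 ?normr_ge0 //; lra.
have XY9 : 3 * 9 <= X * Y by apply: ler_pM; nra.
apply: (le_lt_trans nA); apply: lt_le_trans nB; nra.
Qed.

(* The same inequality for b = -2, provided u > 0 (j odd) and |p| > 2u (j < d). *)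
Lemma dom_sub1_two (R : realFieldType) (b u p : R) : b = -2 ->
  1 <= u -> 2 * u < `|p| ->
  `|u * (p - 1)| < `|u * (p - 1) + p * (b * u - 1)|.
Proof.
move=> -> u1 up.
have nA : `|u * (p - 1)| <= u * (`|p| + 1).
  rewrite normrM (@ger0_norm _ u) ?ler_wpM2l ?(le_trans (ler_normB _ _)) ?normr1 //; lra.
have nB : `|p| * (u + 1) - u <= `|u * (p - 1) + p * (- 2 * u - 1)|.
  have -> : u * (p - 1) + p * (- 2 * u - 1) = - (p * (u + 1)) - u by ring.
  apply: le_trans (lerB_dist _ _).
  by rewrite normrN normrM !(@ger0_norm _ u) ?(@ger0_norm _ (u + 1)) //; lra.
apply: (le_lt_trans nA); apply: lt_le_trans nB; nra.
Qed.

Lemma normr_sign (R : realDomainType) (x : R) : x = `|x| \/ x = - `|x|.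
Proof.
by case: (lerP 0 x) => x0; [left; rewrite ger0_norm | right; rewrite ltr0_norm ?opprK].
Qed.

(* Polynomial inequality behind |Q_j(d)| < |Q_j(d-2)| for b = -2; both
   expressions are dominated by their u^2 r^2 terms (4 and -20 times u^2 r^2).
   The case u = 1 is j = 2; otherwise |u| >= 2. *)
Lemma dom_sub2_two (R : realFieldType) (b u r : R) : b = -2 ->
  (u = 1 \/ 2 <= `|u|) -> 2 * `|u| <= `|r| ->
  `|b * u ^+ 2 * (r - 1) * (b * r - 1)| <
  `|b * u ^+ 2 * (r - 1) * (b * r - 1) + u * b * r * (b + 1) * (r - 1) * (b ^+ 2 * u - 1)
    + b ^+ 2 * r ^+ 2 * (b * u - 1) * (b ^+ 2 * u - 1)|.
Proof.
move=> -> hu hr.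
set A := (X in `|X| < _); set B := (X in _ < `|X|).
suff [hAB hBA] : A < - B /\ B < A.
  apply: (@lt_le_trans _ _ (- B)); last by rewrite ler_normr lexx orbT.
  by rewrite ltr_norml opprK hAB hBA.
rewrite /A /B; set N := `|r| in hr.
case: hu => [u1 | hM].
  move: hr; rewrite u1 normr1 => hN.
  by case: (normr_sign r) => ->; rewrite -/N; split; nra.
set M := `|u| in hM hr.
have h1 : 0 <= (M - 2) * (N * N) by apply: mulr_ge0; nra.
have h2 : 0 <= (N - 2) * (M * M) by apply: mulr_ge0; nra.
have h3 : 0 <= (M - 2) * (M * N * N) by apply: mulr_ge0; nra.
by case: (normr_sign u) => ->; case: (normr_sign r) => ->; rewrite -/M -/N; split; nra.
Qed.

Lemma ltr_norm_scaled (R : numFieldType) (x y n c a a' : R) :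
  n != 0 -> c != 0 -> x * n = c * a -> y * n = c * a' -> `|a| < `|a'| -> `|x| < `|y|.
Proof.
move=> n0 c0 ex ey lt_aa'.
have n_gt0 : 0 < `|n| by rewrite normr_gt0.
have c_gt0 : 0 < `|c| by rewrite normr_gt0.
by rewrite -(ltr_pM2r n_gt0) -!normrM ex ey !normrM ltr_pM2l.
Qed.

Lemma normb_pow (q n : nat) : `|(- q%:R : rat) ^+ n| = q%:R ^+ n.
Proof. by rewrite normrX normrN normr_nat. Qed.

Lemma Qeig_sub1_dominates q d j : (2 <= j <= d)%N ->
  (3 <= q)%N \/ [/\ q = 2, odd j & j < d]%N ->
  `|Qeig q d j d| < `|Qeig q d j (d - 1)|.
Proof.
move=> /andP[j2 jd] hq.
have q2 : (2 <= q)%N by case: hq => [|[->]] //; apply: leq_trans.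
have [m jm] : exists m, j = m.+1 by exists j.-1; lia.
have [k dk] : exists k, d = (k + m.+1)%N by exists (d - j)%N; lia.
rewrite jm dk (_ : (k + m.+1 - 1 = k + m)%N); last lia.
have [eTop eSub] := Qeig_sub1_scaled m k q2.
apply: (ltr_norm_scaled _ _ eTop eSub).
- by rewrite -exprS expr_sub1_neq0 // normb_gt1.
- rewrite !mulf_neq0 ?signr_eq0 ?expf_neq0 ?gauss_neq0 ?normb_gt1 ?leq_addr //.
  by rewrite oppr_eq0 pnatr_eq0 -lt0n ltnW.
have q_gt1 : 1 < q%:R :> rat by rewrite ltr1n.
case: hq => [q3 | [q2e odd_j jd_lt]].
- apply: dom_sub1_large; rewrite ?normb_pow.
  + by rewrite lerN2 ler_nat.
  + by rewrite normrN normr_nat -[X in X <= _]expr1 ler_eXn2l //; lia.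
  + by rewrite normrN normr_nat -exprS ler_eXn2l // leq_addl.
- move: odd_j; rewrite jm /= => even_m; subst q.
  have u_pos : (- 2%:R : rat) ^+ m = 2%:R ^+ m.
    by rewrite exprNn -signr_odd (negbTE even_m) mul1r.
  apply: dom_sub1_two => //; rewrite u_pos ?exprn_ege1 ?ler1n // normb_pow -exprS ltr_eXn2l //.
  lia.
Qed.

Lemma Qeig2_sub2_dominates d j : (2 <= j <= d)%N ->
  `|Qeig 2 d j d| < `|Qeig 2 d j (d - 2)|.
Proof.
move=> /andP[j2 jd].
have [m jm] : exists m, j = m.+2 by exists (j - 2)%N; lia.
have [k dk] : exists k, d = (k + m.+2)%N by exists (d - j)%N; lia.
rewrite jm dk (_ : (k + m.+2 - 2 = k + m)%N); last lia.
have [eTop eSub] := Qeig_sub2_scaled m k (isT : (2 <= 2)%N).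
have b_gt1 := normb_gt1 (isT : (2 <= 2)%N).
apply: (ltr_norm_scaled _ _ eTop eSub).
- by rewrite mulf_neq0 // -?exprS -?exprD expr_sub1_neq0.
- by rewrite !mulf_neq0 ?signr_eq0 ?expf_neq0 ?gauss_neq0 ?leq_addr.
apply: dom_sub2_two; rewrite ?normb_pow //.
- case: (posnP m) => [-> | m_gt0]; [by left | right].
  by rewrite -[X in X <= _]expr1 ler_eXn2l ?ltr1n.
- by rewrite -exprS ler_eXn2l ?ltr1n //; lia.
Qed.

Lemma prime_power_ge2 q : prime_power q -> (2 <= q)%N.
Proof.
move=> [p [e [p_prime [e_gt0 ->]]]].
by rewrite (leq_trans (prime_gt1 p_prime)) // -{1}(expn1 p) leq_pexp2l // prime_gt0.
Qed.

Theorem lemma5p6 (q d j : nat) :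
  prime_power q -> (6 <= d)%N -> (2 <= j)%N -> (j <= d)%N ->
  (~ (q = 2%N /\ (j = d \/ ~~ odd j)) ->
     `|Qeig q d j d| < `|Qeig q d j (d - 1)|)
  /\
  ((q = 2%N /\ (j = d \/ ~~ odd j)) ->
     `|Qeig q d j d| < `|Qeig q d j (d - 2)|).
Proof.
move=> q_pp _ j2 jd; have q2 := prime_power_ge2 q_pp.
have j_range : (2 <= j <= d)%N by rewrite j2 jd.
split; last by move=> [-> _]; apply: Qeig2_sub2_dominates.
move=> not_exceptional; apply: Qeig_sub1_dominates => //.
have [q3 | q_le2] := ltnP 2 q; [by left | right].
have q_eq2 : q = 2%N by apply/eqP; rewrite eqn_leq q_le2 q2.
have odd_j : odd j.
  by apply: contraT => even_j; case: not_exceptional; split; last right.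
have j_neq_d : j != d.
  by apply/eqP => j_eq_d; case: not_exceptional; split; last left.
by split => //; rewrite ltn_neqAle j_neq_d.
Qed.
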